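(* Let $f\in\mathbb{R}[\mathbf{x}]$, $\mathscr{A}=\operatorname{supp}(f)$, and let $\mathscr{B}\subseteq\mathbb{N}^n$ be a finite set of exponents. Let $f^1_{\mathrm{ts}}$ be the optimal value of $$\mathbf{P}^1_{\mathrm{ts}}:\quad\inf_{\mathbf{y}}\{L_{\mathbf{y}}(f):\ \mathbf{B}_{G^{(1)}}\circ\mathbf{M}_{\mathscr{B}}(\mathbf{y})\in\Pi_{G^{(1)}}(\mathbb{S}^+_{|\mathscr{B}|}),\ y_{\mathbf{0}}=1\}$$ and let $f_{\mathrm{sdsos}}=\sup\{b\in\mathbb{R}: f-b\in\mathrm{SDSOS}\}$. Then $f^1_{\mathrm{ts}}\ge f_{\mathrm{sdsos}}$.
   Context: A symmetric $t\times t$ matrix $\mathbf{G}$ is diagonally dominant if $\mathbf{G}_{ii}\ge\sum_{j\ne i}|\mathbf{G}_{ij}|$ for all $i$, and scaled diagonally dominant if $\mathbf{D}\mathbf{G}\mathbf{D}$ is diagonally dominant for some positive definite diagonal matrix $\mathbf{D}$. A polynomial $h$ belongs to $\mathrm{SDSOS}$ if $h=(\mathbf{x}^{\mathscr{B}})^\intercal\mathbf{G}\,\mathbf{x}^{\mathscr{B}}$ for some scaled diagonally dominant $\mathbf{G}$ indexed by $\mathscr{B}$, where $\mathbf{x}^{\mathscr{B}}=(\mathbf{x}^\beta)_{\beta\in\mathscr{B}}$. Graphs: a chordal extension $G'$ of $G$ is a chordal graph (every cycle of length $\ge4$ has a chord) on the same nodes containing $G$; chordal extensions are fixed so that $G\subseteq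 H$ implies $G'\subseteq H'$. For a graph $G$ with nodes $V\subseteq\mathbb{N}^n$, $\operatorname{supp}(G)=\{\beta+\gamma:\beta=\gamma\in V\text{ or }\{\beta,\gamma\}\in E(G)\}$. $G^{(0)}$ is the graph with nodes $\mathscr{B}$ and edges $\{\beta,\gamma\}$, $\beta\ne\gamma$, $\beta+\gamma\in\mathscr{A}\cup2\mathscr{B}$; $F^{(1)}$ has nodes $\mathscr{B}$ and edges $\{\beta,\gamma\}$, $\beta\ne\gamma$, $\beta+\gamma\in\operatorname{supp}(G^{(0)})$; $G^{(1)}=(F^{(1)})'$. $L_{\mathbf{y}}(\sum f_\alpha\mathbf{x}^\alpha)=\sum f_\alpha y_\alpha$; $\mathbf{M}_{\mathscr{B}}(\mathbf{y})$ is indexed by $\mathscr{B}$ with $(\beta,\gamma)$-entry $y_{\beta+\gamma}$. For a graph $G$ on nodes $V$: $\mathbb{S}(G)$ is the set of symmetric matrices indexed by $V$ vanishing off the pattern of $G$ (off-diagonal non-edges); $\Pi_G$ zeroes off-pattern entries; $\Pi_G(\mathbb{S}^+_{|V|})=\{\Pi_G(\mathbf{Q}):\mathbf{Q}\succeq0\}$; $\mathbf{B}_G$ is the adjacency matrix with unit diagonal; $\circ$ is the entrywise product. *)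

From HB Require Import structures.
From mathcomp Require Import all_boot all_order all_algebra.
From mathcomp Require Import finmap.
From mathcomp Require Import mpoly.
From mathcomp Require Import boolp classical_sets reals constructive_ereal ereal.

Set Implicit Arguments.
Unset Strict Implicit.
Unset Printing Implicit Defensive.

Import Order.TTheory GRing.Theory Num.Theory.
Local Open Scope ring_scope.
Local Open Scope fset_scope.

(* A "matrix indexed by a finite index type T" is a function T -> T -> R. *)
Section Matrices.
Variables (R : realType) (T : finType).

Definition symmetric_mx (G : T -> T -> R) : Prop := forall i j, G i j = G j i.

Definition psd (Q : T -> T -> R) : Prop :=
  symmetric_mx Q /\ forall v : T -> R, 0 <= \sum_i \sum_j v i * Q i j * v j.

Definition diag_dominant (G : T -> T -> R) : Prop :=
  symmetric_mx G /\ forall i, \sum_(j | j != i) `|G i j| <= G i i.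

Definition diag_scale (d : T -> R) (G : T -> T -> R) : T -> T -> R :=
  fun i j => d i * G i j * d j.

Definition scaled_diag_dominant (G : T -> T -> R) : Prop :=
  symmetric_mx G /\
  exists d : T -> R, (forall i, 0 < d i) /\ diag_dominant (diag_scale d G).

Definition hadamard (A B : T -> T -> R) : T -> T -> R := fun i j => A i j * B i j.

Definition adjB (E : rel T) : T -> T -> R :=
  fun i j => if (i == j) || E i j then 1 else 0.

Definition projG (E : rel T) (Q : T -> T -> R) : T -> T -> R :=
  fun i j => if (i == j) || E i j then Q i j else 0.

Definition projG_psd (E : rel T) : set (T -> T -> R) :=
  [set projG E Q | Q in [set Q | psd Q]].

End Matrices.

Section Graphs.
Variable T : finType.

Definition simple_graph (E : rel T) : Prop :=
  (forall x y, E x y = E y x) /\ (forall x, ~~ E x x).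

(* a cycle of length >= 4: distinct vertices s_0, ..., s_(k-1), k >= 4,
   with s_i adjacent to s_(i+1 mod k); a chord joins two of its vertices
   that are not consecutive along the cycle. *)
Definition chordal (E : rel T) : Prop :=
  forall s : seq T, uniq s -> (4 <= size s)%N -> cycle E s ->
    exists i j : 'I_(size s), [/\ i != j,
       (j : nat) != (i.+1 %% size s)%N, (i : nat) != (j.+1 %% size s)%N
       & E (tnth (in_tuple s) i) (tnth (in_tuple s) j)].

Definition chordal_extension (E E' : rel T) : Prop :=
  simple_graph E' /\ (forall x y, E x y -> E' x y) /\ chordal E'.

End Graphs.

Section TSSOS.
Variables (R : realType) (n : nat).

Local Notation mono := ('X_{1..n}).

Definition supp (f : {mpoly R[n]}) : pred mono := fun a => a \in msupp f.

Variable B : {fset mono}.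
Local Notation node := (B : finType).

Definition G0 (f : {mpoly R[n]}) : rel node :=
  fun b c => (b != c) &&
    (supp f (val b + val c)%MM ||
     [exists d : node, (val b + val c)%MM == (val d + val d)%MM]).

Definition supp_graph (E : rel node) : pred mono :=
  fun a => [exists b : node, exists c : node,
              ((b == c) || E b c) && (a == (val b + val c)%MM)].

Definition F1 (f : {mpoly R[n]}) : rel node :=
  fun b c => (b != c) && supp_graph (G0 f) (val b + val c)%MM.

Definition Ly (y : mono -> R) (f : {mpoly R[n]}) : R :=
  \sum_(a <- msupp f) f@_a * y a.

Definition moment_mx (y : mono -> R) : node -> node -> R :=
  fun b c => y (val b + val c)%MM.

(* SDSOS (with respect to the monomial basis x^B) *)
Definition sdsos (h : {mpoly R[n]}) : Prop :=
  exists G : node -> node -> R, scaled_diag_dominant G /\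
    h = \sum_b \sum_c G b c *: 'X_[(val b + val c)%MM].

Definition ts_feasible (E1 : rel node) (y : mono -> R) : Prop :=
  projG_psd E1 (hadamard (adjB R E1) (moment_mx y)) /\ y 0%MM = 1.

Definition f_ts (f : {mpoly R[n]}) (E1 : rel node) : \bar R :=
  ereal_inf [set (Ly y f)%:E | y in ts_feasible E1].

Definition f_sdsos (f : {mpoly R[n]}) : \bar R :=
  ereal_sup [set b%:E | b in [set b : R | sdsos (f - b%:MP)]].

End TSSOS.

From HB Require Import structures.
From mathcomp Require Import all_boot all_order all_algebra.
From mathcomp Require Import finmap mpoly.
From mathcomp Require Import boolp classical_sets reals constructive_ereal ereal.
From mathcomp Require Import ring lra.

Set Implicit Arguments.
Unset Strict Implicit.
Unset Printing Implicit Defensive.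

Import Order.TTheory GRing.Theory Num.Theory.

Local Open Scope ring_scope.

(* If f - b = sum G_uv x^(u+v) with G scaled diagonally dominant and y is
   feasible for P^1_ts, let Q be a PSD matrix with Pi_G1(Q) = B_G1 o M_B(y).
   Replacing y by 0 outside supp(f - b) u 2B does not change
   L_y(f - b) = L_y(f) - b, and turns it into <G', Q>, where G' is G with the
   entries outside that set of monomials zeroed.  Every pair u <> v with u + v
   in supp(f) u 2B is an edge of F^(1), hence of G^(1) (and u + v = 0 forces
   u = v), so Q agrees with M_B(y) wherever G' does not vanish.  G' keeps the
   diagonal of G, so it is still scaled diagonally dominant, and <G', Q> >= 0
   because the 2x2 principal minors of Q give 2|Q_uv| <= Q_uu + Q_vv. *)

Section ScaledDiagonalDominance.
Variables (R : realType) (T : finType).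
Implicit Types (G H Q : T -> T -> R) (d : T -> R).

Definition mx_inner (A C : T -> T -> R) : R := \sum_i \sum_j A i j * C i j.

Lemma sum_mul_delta (F : T -> R) i : \sum_b F b * (b == i)%:R = F i.
Proof.
rewrite (bigD1 i) //= big1 => [|b /negbTE ->]; first by rewrite eqxx mulr1 addr0.
by rewrite mulr0.
Qed.

Lemma sum_mul_pair (F : T -> R) i j x y :
  \sum_b F b * (x * (b == i)%:R + y * (b == j)%:R) = x * F i + y * F j.
Proof.
under eq_bigr do rewrite mulrDr mulrCA [F _ * (y * _)]mulrCA.
by rewrite big_split -!mulr_sumr !sum_mul_delta.
Qed.

Lemma psd_quad_pair Q i j x y : psd Q ->
  0 <= x * x * Q i i + 2 * x * y * Q i j + y * y * Q j j.
Proof.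
move=> [symQ /(_ (fun a => x * (a == i)%:R + y * (a == j)%:R))].
under eq_bigr do under eq_bigr do rewrite -mulrA.
under eq_bigr do rewrite -mulr_sumr sum_mul_pair mulrC.
rewrite sum_mul_pair (symQ j i).
lra.
Qed.

Lemma psd_diag_ge0 Q i : psd Q -> 0 <= Q i i.
Proof. by move/(psd_quad_pair i i 1 0); lra. Qed.

Lemma psd_offdiag_le Q i j : psd Q -> `|2 * Q i j| <= Q i i + Q j j.
Proof.
move=> psdQ; have := psd_quad_pair i j 1 1 psdQ.
have := psd_quad_pair i j 1 (-1) psdQ.
by rewrite ler_norml => *; apply/andP; split; lra.
Qed.

Lemma psd_diag_scale d Q : psd Q -> psd (diag_scale d Q).
Proof.
move=> [symQ qQ]; split=> [i j|v]; first by rewrite /diag_scale symQ; ring.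
have := qQ (fun i => v i * d i); congr (_ <= _).
by apply: eq_bigr => i _; apply: eq_bigr => j _; rewrite /diag_scale; ring.
Qed.

Lemma sum_offdiag_sym (K : T -> T -> R) (g : T -> R) : symmetric_mx K ->
  \sum_i \sum_(j | j != i) K i j * g j = \sum_i \sum_(j | j != i) K i j * g i.
Proof.
move=> symK; under eq_bigr do rewrite big_mkcond /=.
rewrite exchange_big /=; apply: eq_bigr => i _.
by rewrite [RHS]big_mkcond /=; apply: eq_bigr => j _; rewrite eq_sym symK.
Qed.

Lemma dd_inner_psd_ge0 H Q : diag_dominant H -> psd Q -> 0 <= mx_inner H Q.
Proof.
move=> [symH ddH] psdQ.
set A := \sum_i \sum_(j | j != i) `|H i j| * Q i i.
have split_diag : mx_inner H Q =
    \sum_i H i i * Q i i + \sum_i \sum_(j | j != i) H i j * Q i j.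
  by rewrite -big_split; apply: eq_bigr => i _; rewrite (bigD1 i).
have diag_ge : A <= \sum_i H i i * Q i i.
  apply: ler_sum => i _; rewrite -mulr_suml.
  exact: ler_wpM2r (psd_diag_ge0 i psdQ) _ _ (ddH i).
have off_ge : - (A + A) <= 2 * \sum_i \sum_(j | j != i) H i j * Q i j.
  have -> : A + A = A + \sum_i \sum_(j | j != i) `|H i j| * Q j j.
    rewrite (sum_offdiag_sym (fun j => Q j j) (K := fun i j => `|H i j|)) //.
    by move=> i j; rewrite symH.
  rewrite -big_split -sumrN mulr_sumr; apply: ler_sum => i _.
  rewrite -big_split -sumrN mulr_sumr; apply: ler_sum => j _ /=.
  rewrite -mulrDr mulrCA; apply: lerNnormlW; rewrite normrM.
  exact: ler_wpM2l (normr_ge0 _) _ _ (psd_offdiag_le i j psdQ).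
lra.
Qed.

Lemma sdd_inner_psd_ge0 G Q : scaled_diag_dominant G -> psd Q -> 0 <= mx_inner G Q.
Proof.
move=> [_ [d [d_gt0 ddG]]] psdQ.
have d_neq0 i : d i != 0 by rewrite gt_eqF.
have -> : mx_inner G Q = mx_inner (diag_scale d G) (diag_scale (fun i => (d i)^-1) Q).
  apply: eq_bigr => i _; apply: eq_bigr => j _; rewrite /diag_scale.
  by field; rewrite !d_neq0.
exact: dd_inner_psd_ge0 ddG (psd_diag_scale _ psdQ).
Qed.

Lemma sdd_mask G (keep : rel T) :
  (forall i j, keep i j = keep j i) -> (forall i, keep i i) ->
  scaled_diag_dominant G ->
  scaled_diag_dominant (fun i j => if keep i j then G i j else 0).
Proof.
move=> keepC keep_diag [symG [d [d_gt0 [_ ddG]]]].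
split=> [i j|]; first by rewrite keepC symG.
exists d; split=> //; split=> [i j|i].
  by rewrite /diag_scale keepC symG; case: (keep j i); ring.
rewrite /diag_scale keep_diag; apply: le_trans (ddG i); apply: ler_sum => j _.
by case: (keep i j); rewrite ?mulr0 ?mul0r ?normr0.
Qed.

End ScaledDiagonalDominance.

Section PseudoMoments.
Variables (R : realType) (n : nat).
Implicit Types (p : {mpoly R[n]}) (y : 'X_{1..n} -> R).

Lemma Ly_seq y p (s : seq 'X_{1..n}) : uniq s -> {subset msupp p <= s} ->
  Ly y p = \sum_(a <- s) p@_a * y a.
Proof.
move=> uniq_s sub_s; rewrite /Ly [RHS](bigID (mem (msupp p))) /=.
rewrite [X in _ + X]big1 ?addr0 => [|a /memN_msupp_eq0 ->]; last by rewrite mul0r.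
rewrite -[RHS]big_filter; apply: perm_big.
apply: uniq_perm; [exact: msupp_uniq | exact: filter_uniq |].
by move=> a; rewrite mem_filter andb_idr //; apply: sub_s.
Qed.

Lemma Ly_is_scalar y : scalar (@Ly R n y).
Proof.
move=> c p q; pose s := undup (msupp p ++ msupp q).
have Ly_s r : {subset msupp r <= msupp p ++ msupp q} ->
    Ly y r = \sum_(a <- s) r@_a * y a.
  by move=> sub_r; apply: Ly_seq (undup_uniq _) _ => a /sub_r; rewrite mem_undup.
have sub_p : {subset msupp p <= msupp p ++ msupp q} by move=> a; rewrite mem_cat => ->.
have sub_q : {subset msupp q <= msupp p ++ msupp q}.
  by move=> a; rewrite mem_cat => ->; rewrite orbT.
have sub_pq : {subset msupp (c *: p + q) <= msupp p ++ msupp q}.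
  by move=> a /msuppD_le; rewrite !mem_cat => /orP[/msuppZ_le ->|->]; rewrite ?orbT.
rewrite (Ly_s _ sub_pq) (Ly_s _ sub_p) (Ly_s _ sub_q).
rewrite mulr_sumr -big_split; apply: eq_bigr => a _.
by rewrite mcoeffD mcoeffZ mulrDl mulrA.
Qed.

HB.instance Definition _ y :=
  GRing.isLinear.Build R {mpoly R[n]} R *%R (Ly y) (Ly_is_scalar y).

Lemma LyX y m : Ly y 'X_[m] = y m.
Proof. by rewrite /Ly msuppX big_seq1 mcoeffX eqxx mul1r. Qed.

Lemma LyC y c : Ly y c%:MP = c * y 0%MM.
Proof. by rewrite -alg_mpolyC -mpolyX0 linearZ /= LyX. Qed.

Lemma eq_in_Ly y y' p : {in msupp p, y =1 y'} -> Ly y p = Ly y' p.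
Proof. by move=> eq_y; apply: eq_big_seq => a /eq_y ->. Qed.

Variable B : {fset 'X_{1..n}}.

Definition in2B (a : 'X_{1..n}) : bool := [exists k : B, a == (val k + val k)%MM].

(* 2B is kept in the mask so that the masked Gram matrix keeps its diagonal. *)
Lemma sdsos_Ly_ge0 h y (Q : B -> B -> R) : sdsos B h -> psd Q ->
  (forall i j : B, ((val i + val j)%MM \in msupp h) || in2B (val i + val j) ->
     Q i j = y (val i + val j)%MM) ->
  0 <= Ly y h.
Proof.
move=> [G [sddG def_h]] psdQ Q_moment.
pose S a := (a \in msupp h) || in2B a.
pose keep (i j : B) := S (val i + val j)%MM.
have -> : Ly y h = Ly (fun a => if S a then y a else 0) h.
  by apply: eq_in_Ly => a h_a; rewrite /S h_a.
have -> : Ly (fun a => if S a then y a else 0) h =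
          mx_inner (fun i j => if keep i j then G i j else 0) Q.
  rewrite {1}def_h linear_sum; apply: eq_bigr => i _.
  rewrite linear_sum; apply: eq_bigr => j _.
  rewrite linearZ /= LyX /keep; case: ifP => [/Q_moment -> //|_].
  by rewrite mulr0 mul0r.
apply: sdd_inner_psd_ge0 psdQ; apply: sdd_mask sddG => [i j|i].
  by rewrite /keep addmC.
by apply/orP; right; apply/existsP; exists i.
Qed.

Lemma F1_of_msupp (f : {mpoly R[n]}) c (i j : B) : i != j ->
  ((val i + val j)%MM \in msupp (f - c%:MP)) || in2B (val i + val j) ->
  F1 f i j.
Proof.
move=> neq_ij supp_ij; rewrite /F1 neq_ij.
apply/existsP; exists i; apply/existsP; exists j.
rewrite eqxx andbT /G0 (negbTE neq_ij) /supp /=.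
case/orP: supp_ij => [|in2B_ij]; last by apply/orP; right.
move/msuppB_le; rewrite mem_cat msuppC => /orP[-> //|].
case: eqP => // _; rewrite inE mnmD_eq0 => /andP[/eqP i0 /eqP j0].
by case/eqP: neq_ij; apply: val_inj; rewrite i0 j0.
Qed.

Lemma ts_feasible_moment (E : rel B) y : ts_feasible E y ->
  exists2 Q : B -> B -> R, psd Q &
    forall i j, (i == j) || E i j -> Q i j = y (val i + val j)%MM.
Proof.
move=> [[Q psdQ proj_Q] _]; exists Q => // i j E_ij.
have := congr1 (fun M => M i j) proj_Q.
by rewrite /projG /hadamard /adjB /moment_mx E_ij mul1r.
Qed.

End PseudoMoments.

Local Open Scope ereal_scope.

Theorem theorem7p3 (R : realType) (n : nat) (f : {mpoly R[n]})
    (B : {fset 'X_{1..n}}) (G1 : rel B) :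
  chordal_extension (F1 f) G1 ->
  f_sdsos B f <= f_ts f G1.
Proof.
move=> [_ [F1_sub_G1 _]].
apply: ge_ereal_sup => _ [b sdsos_fb <-]; apply/ereal_infP => _ [y feas_y <-].
have [Q psdQ Q_moment] := ts_feasible_moment feas_y.
have : (0 <= Ly y (f - b%:MP))%R.
  apply: sdsos_Ly_ge0 sdsos_fb psdQ _ => i j supp_ij; apply: Q_moment.
  have [//|neq_ij /=] := eqVneq i j.
  exact: F1_sub_G1 (F1_of_msupp neq_ij supp_ij).
by rewrite lee_fin linearB /= LyC (proj2 feas_y) mulr1 subr_ge0.
Qed.
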